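(* Let $K$ be an $n$-dimensional oriented, well-centered, manifold-like simplicial complex with boundary subcomplex $\partial K$ and circumcentric dual cell complex, and let $1\le k\le n$. For every primal discrete form $\alpha\in\Omega_d^{k-1}(K)$ and every dual discrete form $\hat\beta=(\hat\beta_{\mathrm i},\hat\beta_{\mathrm b})\in\Omega_d^{n-k}(\star K)$, $$\langle \mathbf{d}\alpha\wedge\hat\beta_{\mathrm i},K\rangle+(-1)^{k-1}\langle \alpha\wedge(\mathbf{d}_{\mathrm i}\hat\beta_{\mathrm i}+\mathbf{d}_{\mathrm b}\hat\beta_{\mathrm b}),K\rangle=\langle \alpha|_{\partial K}\wedge\hat\beta_{\mathrm b},\partial K\rangle .$$
   Context: Setting. $K$ is an $n$-dimensional manifold-like simplicial complex (every simplex is a face of some $n$-simplex), oriented ($n$-simplices sharing an $(n-1)$-face are coherently oriented, lower-dimensional simplices are individually oriented) and well-centered (every simplex contains its circumcenter in its interior). $\partial K$ is the $(n-1)$-dimensional boundary subcomplex: the $(n-1)$-simplices that are faces of exactly one $n$-simplex, together with all their faces. For simplices $\sigma^{j-1}\prec\sigma^{j}$ (face relation) let $[\sigma^{j-1}:\sigma^{j}]\in\{\pm1\}$ be the coefficient of $\sigma^{j-1}$ in the simplicial boundary $\partial[v_0,\dots,v_j]=\sum_i(-1)^i[v_0,\dots,\widehat{v_i},\dots,v_j]$. Dual cells. Each simplex $\sigma^j\in K$ has a circumcentric interior dual $(n-j)$-cell $\star_{\mathrm i}\sigma^j$; each simplex $\tau^j\in\partial K$ has a boundary dual $(n-1-j)$-cell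 $\star_{\mathrm b}\tau^j$ (its circumcentric dual within $\partial K$), lying on the boundary of the dual complex. Discrete forms. $\Omega_d^j(K)$ (resp. $\Omega_d^j(\partial K)$) is the space of real-valued functions on the $j$-simplices of $K$ (resp. $\partial K$); $\Omega_d^m(\star_{\mathrm i}K)$ is the space of real functions on interior dual $m$-cells $\star_{\mathrm i}\sigma^{n-m}$; $\Omega_d^m(\partial(\star K))$ is the space of real functions on boundary dual $m$-cells $\star_{\mathrm b}\tau^{n-1-m}$, $\tau\in\partial K$; $\Omega_d^m(\star K)=\Omega_d^m(\star_{\mathrm i}K)\times\Omega_d^m(\partial(\star K))$, elements written $\hat\beta=(\hat\beta_{\mathrm i},\hat\beta_{\mathrm b})$. For primal $\alpha$, $\alpha|_{\partial K}$ is its restriction to simplices of $\partial K$. Derivatives. Primal: $(\mathbf d\alpha)(\sigma^{j})=\sum_{\sigma^{j-1}\prec\sigma^{j}}[\sigma^{j-1}:\sigma^{j}]\,\alpha(\sigma^{j-1})$. Dual: for $\hat\beta\in\Omega_d^{m}(\star K)$, $m\le n-1$, set $j=n-m$; then $\mathbf d_{\mathrm i}\hat\beta_{\mathrm i},\mathbf d_{\mathrm b}\hat\beta_{\mathrm b}\in\Omega_d^{m+1}(\star_{\mathrm i}K)$ are $(\mathbf d_{\mathrm i}\hat\beta_{\mathrm i})(\star_{\mathrm i}\sigma^{j-1})=(-1)^{j}\sum_{\sigma^{j}\succ\sigma^{j-1}}[\sigma^{j-1}:\sigma^{j}]\,\hat\beta_{\mathrm i}(\star_{\mathrm i}\sigma^{j})$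 and $(\mathbf d_{\mathrm b}\hat\beta_{\mathrm b})(\star_{\mathrm i}\sigma^{j-1})=(-1)^{j-1}\hat\beta_{\mathrm b}(\star_{\mathrm b}\sigma^{j-1})$ if $\sigma^{j-1}\in\partial K$, and $0$ otherwise. Primal-dual wedge pairings (extended bilinearly). For $\alpha\in\Omega_d^j(K)$, $\hat\beta\in\Omega_d^{n-j}(\star_{\mathrm i}K)$: $\langle\alpha\wedge\hat\beta,K\rangle=\sum_{\sigma^j\in K}\alpha(\sigma^j)\hat\beta(\star_{\mathrm i}\sigma^j)$ and $\langle\hat\beta\wedge\alpha,K\rangle=(-1)^{j(n-j)}\langle\alpha\wedge\hat\beta,K\rangle$. For $\alpha\in\Omega_d^j(\partial K)$, $\hat\gamma\in\Omega_d^{n-1-j}(\partial(\star K))$: $\langle\alpha\wedge\hat\gamma,\partial K\rangle=\sum_{\tau^j\in\partial K}\alpha(\tau^j)\hat\gamma(\star_{\mathrm b}\tau^j)$ and $\langle\hat\gamma\wedge\alpha,\partial K\rangle=(-1)^{j(n-1-j)}\langle\alpha\wedge\hat\gamma,\partial K\rangle$. *)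

From HB Require Import structures.
From mathcomp Require Import all_boot all_order all_algebra.
From mathcomp Require Import reals.
Set Implicit Arguments. Unset Strict Implicit. Unset Printing Implicit Defensive.
Import Order.TTheory GRing.Theory Num.Theory.
Local Open Scope ring_scope.

(* The orientation of a simplex s is encoded by a boolean
   [or s]: false = the orientation of the increasing vertex order,
   true = the opposite orientation. *)

Section Defs.
Variable N : nat.
Notation simplex := {set 'I_N}.

Definition simp (K : {set simplex}) (j : nat) : {set simplex} :=
  [set s in K | #|s| == j.+1].

Definition is_complex (K : {set simplex}) : Prop :=
  (forall s, s \in K -> s != set0) /\
  (forall s t : simplex, s \in K -> t \subset s -> t != set0 -> t \in K).

Definition manifold_like (K : {set simplex}) (n : nat) : Prop :=
  forall s, s \in K -> exists2 r, r \in simp K n & s \subset r.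

(* incidence number [t : s]: coefficient of the oriented t in the simplicial
   boundary of the oriented s (0 if t is not a codimension-one face of s).
   If s = [v_0 < ... < v_j] and t = s minus v_i, then i = #{u in s | u < v_i}. *)
Definition incid (R : nzRingType) (or : simplex -> bool) (t s : simplex) : R :=
  if (t \subset s) && (#|s :\: t| == 1%N) then
    match [pick v in s :\: t] with
    | Some v => (-1) ^+ (#|[set u in s | (u < v)%N]| + or t + or s)
    | None => 0
    end
  else 0.

Definition coherent (R : nzRingType) (K : {set simplex}) (n : nat)
    (or : simplex -> bool) : Prop :=
  forall s1 s2 t, s1 \in simp K n -> s2 \in simp K n -> s1 != s2 ->
    t \in simp K n.-1 -> t \subset s1 -> t \subset s2 ->
    incid R or t s1 = - incid R or t s2.

Definition bdry_top (K : {set simplex}) (n : nat) : {set simplex} :=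
  [set t in simp K n.-1 | #|[set r in simp K n | t \subset r]| == 1%N].
Definition bdry (K : {set simplex}) (n : nat) : {set simplex} :=
  [set s in K | [exists t in bdry_top K n, s \subset t]].
Definition bsimp (K : {set simplex}) (n j : nat) : {set simplex} :=
  [set s in bdry K n | #|s| == j.+1].

(* Geometry: vertex positions in R^D, affine independence of the vertices of
   every simplex, and well-centeredness (the circumcenter lies in the
   relative interior, i.e. has strictly positive barycentric coordinates). *)
Definition sqdist (R : realType) D (x y : 'rV[R]_D) : R :=
  ((x - y) *m (x - y)^T) 0 0.

Definition affinely_independent (R : realType) D (p : 'I_N -> 'rV[R]_D)
    (s : simplex) : Prop :=
  forall a : 'I_N -> R, \sum_(v in s) a v = 0 ->
    \sum_(v in s) a v *: p v = 0 -> forall v, v \in s -> a v = 0.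

Definition well_centered_simplex (R : realType) D (p : 'I_N -> 'rV[R]_D)
    (s : simplex) : Prop :=
  exists w : 'I_N -> R,
    [/\ forall v, v \in s -> 0 < w v,
        \sum_(v in s) w v = 1 &
        forall u v, u \in s -> v \in s ->
          sqdist (\sum_(x in s) w x *: p x) (p u)
          = sqdist (\sum_(x in s) w x *: p x) (p v)].

Definition well_centered (R : realType) D (K : {set simplex})
    (p : 'I_N -> 'rV[R]_D) : Prop :=
  forall s, s \in K -> affinely_independent p s /\ well_centered_simplex p s.

(* Discrete forms are functions simplex -> R; a primal j-form is read on
   the j-simplices, an interior dual m-form is indexed by the primal simplex
   s^(n-m) (its value on *_i s), a boundary dual m-form by the boundary
   simplex t^(n-1-m) (its value on *_b t). *)

Definition pd (R : nzRingType) (K : {set simplex}) (or : simplex -> bool)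
    (a : simplex -> R) (s : simplex) : R :=
  \sum_(t in K) incid R or t s * a t.

(* dual derivatives on dual m-forms, j = n - m, evaluated at *_i t^(j-1) *)
Definition dual_di (R : nzRingType) (K : {set simplex}) (or : simplex -> bool)
    (n m : nat) (b : simplex -> R) (t : simplex) : R :=
  (-1) ^+ (n - m) * \sum_(s in K) incid R or t s * b s.

Definition dual_db (R : nzRingType) (K : {set simplex}) (n m : nat)
    (b : simplex -> R) (t : simplex) : R :=
  if t \in bdry K n then (-1) ^+ (n - m).-1 * b t else 0.

Definition wedgeK (R : nzRingType) (K : {set simplex}) (j : nat)
    (a b : simplex -> R) : R :=
  \sum_(s in simp K j) a s * b s.

Definition wedgeB (R : nzRingType) (K : {set simplex}) (n j : nat)
    (a g : simplex -> R) : R :=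
  \sum_(t in bsimp K n j) a t * g t.

End Defs.

From HB Require Import structures.
From mathcomp Require Import all_boot all_order all_algebra zify.
From mathcomp Require Import reals.
Import Order.TTheory GRing.Theory Num.Theory.
Local Open Scope ring_scope.

(* The identity is a summation by parts: exchanging the double sum over pairs
   (face, coface) shows that the interior dual derivative is, up to the sign
   (-1)^k, the adjoint of the primal derivative under the wedge pairing, so
   those two terms cancel; the boundary dual derivative is supported on the
   boundary simplices, where it reproduces the boundary pairing. *)

Section WedgeAdjoint.
Variables (R : comNzRingType) (N : nat).
Variables (K : {set {set 'I_N}}) (or : {set 'I_N} -> bool).

Definition pd_adj (b : {set 'I_N} -> R) (t : {set 'I_N}) : R :=
  \sum_(s in K) incid R or t s * b s.

Lemma incid_card {t s : {set 'I_N}} :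
  incid R or t s != 0 -> #|s| = (#|t|).+1.
Proof.
rewrite /incid; case: ifP => [/andP[ts /eqP c] _|]; last by rewrite eqxx.
have := subset_leq_card ts; move: c; rewrite cardsD (setIidPr ts); lia.
Qed.

(* Only pairs with #|s| = #|t| + 1 contribute, so restricting s to
   j.+1-simplices is the same as restricting t to j-simplices. *)
Lemma exchange_incid_sum j (X : {set 'I_N} -> {set 'I_N} -> R) :
  \sum_(s in simp K j.+1) \sum_(t in K) incid R or t s * X t s =
  \sum_(t in simp K j) \sum_(s in K) incid R or t s * X t s.
Proof.
have sum_simp (F : {set 'I_N} -> R) i :
    \sum_(s in simp K i) F s = \sum_(s in K) (#|s| == i.+1)%:R * F s.
  rewrite big_mkcond [RHS]big_mkcond; apply: eq_bigr => s _.
  by rewrite !inE; case: (s \in K); case: eqP; rewrite ?mul1r ?mul0r.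
rewrite !sum_simp; under [RHS]eq_bigr do rewrite mulr_sumr.
rewrite [RHS]exchange_big /=; apply: eq_bigr => s _.
rewrite mulr_sumr; apply: eq_bigr => t _.
have [->|nz] := eqVneq (incid R or t s) 0; first by rewrite !(mul0r, mulr0).
by rewrite (incid_card nz) eqSS.
Qed.

Lemma wedgeK_pd j (a b : {set 'I_N} -> R) :
  wedgeK K j.+1 (pd K or a) b = wedgeK K j a (pd_adj b).
Proof.
transitivity (\sum_(s in simp K j.+1) \sum_(t in K) incid R or t s * (a t * b s)).
  by apply: eq_bigr => s _; rewrite /pd mulr_suml; apply: eq_bigr => t _; rewrite mulrA.
rewrite exchange_incid_sum; apply: eq_bigr => t _.
by rewrite mulr_sumr; apply: eq_bigr => s _; rewrite mulrCA.
Qed.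

Lemma wedgeK_addr j (a b c : {set 'I_N} -> R) :
  wedgeK K j a (fun s => b s + c s) = wedgeK K j a b + wedgeK K j a c.
Proof. by rewrite /wedgeK -big_split; apply: eq_bigr => s _; rewrite mulrDr. Qed.

Lemma wedgeK_dual_di n m j (a b : {set 'I_N} -> R) :
  wedgeK K j a (dual_di K or n m b) =
  (-1) ^+ (n - m) * wedgeK K j a (pd_adj b).
Proof. by rewrite /wedgeK mulr_sumr; apply: eq_bigr => t _; rewrite mulrCA. Qed.

Lemma wedgeK_dual_db n m j (a b : {set 'I_N} -> R) :
  wedgeK K j a (dual_db K n m b) = (-1) ^+ (n - m).-1 * wedgeB K n j a b.
Proof.
rewrite /wedgeK /wedgeB /dual_db mulr_sumr big_mkcond [RHS]big_mkcond /=.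
apply: eq_bigr => s _; rewrite !inE.
case: (s \in K) => //=; case: [exists _ in _, _]; case: (_ == _) => //=.
- by rewrite mulrCA.
- by rewrite mulr0.
Qed.

End WedgeAdjoint.

Theorem proposition1 (R : realType) (N D n k : nat)
    (K : {set {set 'I_N}}) (or : {set 'I_N} -> bool) (p : 'I_N -> 'rV[R]_D)
    (HK : is_complex K) (Hman : manifold_like K n)
    (Hor : coherent R K n or) (Hwc : well_centered K p)
    (Hk1 : (1 <= k)%N) (Hkn : (k <= n)%N)
    (alpha : {set 'I_N} -> R) (beta_i beta_b : {set 'I_N} -> R) :
  wedgeK K k (pd K or alpha) beta_i
  + (-1) ^+ (k - 1) *
    wedgeK K (k - 1) alpha
      (fun t => dual_di K or n (n - k) beta_i t + dual_db K n (n - k) beta_b t)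
  = wedgeB K n (k - 1) alpha beta_b.
Proof.
case: k Hk1 Hkn => // k _ Hkn.
rewrite subSS subn0 wedgeK_addr wedgeK_pd wedgeK_dual_di wedgeK_dual_db.
rewrite (subKn Hkn) /= mulrDr !mulrA -exprD addnS exprS -expr2 sqrr_sign.
by rewrite -signr_odd addnn odd_double mulr1 mulN1r mul1r addrA addrN add0r.
Qed.
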